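(* Fix $\lambda\in[0,1)$, $p\in[0,1]$, $T>0$, and consider the coupled construction below on $\Omega=\Omega_W\times\Omega_U\times\Omega_0$. Let $\mathcal{C}$ be the set of $\omega\in\Omega$ such that $\lim_{N\to\infty}\sup_{t\in[0,T]}|W^N(\omega,t)-(1+\lambda)t|=0$ and $\lim_{N\to\infty}\frac1N\sum_{k=1}^N\mathbb{I}_{[a,b)}(U(\omega,k))=b-a$ for every $[a,b)\subset[0,1]$ with $a<b$. Assume there is $\mathbf{v}^0\in\overline{\mathcal{V}}^\infty$ such that $\lim_{N\to\infty}\|\mathbf{V}^N(\omega,0)-\mathbf{v}^0\|_w=0$ for all $\omega\in\mathcal{C}$. Then for every $\omega\in\mathcal{C}$, every subsequence of $(\mathbf{X}^N(\omega,\cdot))_{N\ge1}$ has a further subsequence $(\mathbf{X}^{N_i}(\omega,\cdot))$ converging to some $\mathbf{x}=(\mathbf{v},\mathbf{a},\mathbf{l},\mathbf{c})$, in the sense that $d^{\mathbb{Z}_+}(\mathbf{V}^{N_i},\mathbf{v})$, $d^{\mathbb{Z}_+}(\mathbf{A}^{N_i},\mathbf{a})$, $d^{\mathbb{Z}_+}(\mathbf{L}^{N_i},\mathbf{l})$, $d^{\mathbb{Z}_+}(\mathbf{C}^{N_i},\mathbf{c})$ all tend to $0$ as $i\to\infty$; moreover $\mathbf{v}(0)=\mathbf{v}^0$, $\mathbf{a}(0)=\mathbf{l}(0)=\mathbf{c}(0)=0$, and every scalar coordinate $\mathbf{x}_j$ of $\mathbf{x}$ satisfies $|\mathbf{x}_j(a)-\mathbf{x}_j(b)|\le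 L|a-b|$ for all $a,b\in[0,T]$, where $L>0$ is a constant independent of $\omega$, $\mathbf{x}$ and $T$.
   Context: $\mathcal{S}=\{\mathbf{s}\in[0,1]^{\mathbb{Z}_+}:1=\mathbf{s}_0\ge\mathbf{s}_1\ge\cdots\ge0\}$, $\overline{\mathcal{S}}^\infty=\{\mathbf{s}\in\mathcal{S}:\sum_{i\ge1}\mathbf{s}_i<\infty\}$, $\overline{\mathcal{V}}^\infty=\{\mathbf{v}:\mathbf{v}_i=\sum_{j\ge i}\mathbf{s}_j\ \forall i,\text{ for some }\mathbf{s}\in\overline{\mathcal{S}}^\infty\}$; $\|\mathbf{x}\|_w^2=\sum_{i\ge0}2^{-i}\mathbf{x}_i^2$; for $\mathbb{R}^{\mathbb{Z}_+}$-valued functions on $[0,T]$, $d^{\mathbb{Z}_+}(\mathbf{x},\mathbf{y})=\sup_{t\in[0,T]}\|\mathbf{x}(t)-\mathbf{y}(t)\|_w$. Coupled construction: on $(\Omega_W,\mathcal{F}_W,\mathbb{P}_W)$ let $W$ be a Poisson process of rate $1+\lambda$; on $(\Omega_U,\mathcal{F}_U,\mathbb{P}_U)$ let $U(k)$, $k\ge1$, be i.i.d. uniform on $[0,1]$; on $(\Omega_0,\mathcal{F}_0,\mathbb{P}_0)$ let $\mathbf{V}^{(0,N)}$, $N\ge1$, be random variables with values in $\overline{\mathcal{V}}^\infty$ whose coordinates are integer multiples of $1/N$; take the product space $\Omega$. Set $W^N(t)=W(Nt)/N$ and let $t_k$ be the $k$-th jump time of $W^N$. Put $\mathbf{V}^N(0)=\mathbf{V}^{(0,N)}$;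 the processes $\mathbf{A}^N_i,\mathbf{L}^N_i,\mathbf{C}^N_i$ ($i\ge1$) start at $0$ and are constant between jump times; at $t_k$: for each $i\ge1$ with $U(k)\in\frac{\lambda}{1+\lambda}[0,\mathbf{V}^N_{i-1}(t_k-)-\mathbf{V}^N_i(t_k-))$, $\mathbf{A}^N_i$ increases by $1/N$; for each $i\ge1$ with $U(k)\in\frac{\lambda}{1+\lambda}+\frac{1-p}{1+\lambda}[0,\mathbf{V}^N_i(t_k-)-\mathbf{V}^N_{i+1}(t_k-))$, $\mathbf{L}^N_i$ increases by $1/N$; if $U(k)\in[1-\frac{p}{1+\lambda},1)$, $\mathbf{C}^N_j$ increases by $1/N$ for all $1\le j\le \sup\{i:\mathbf{V}^N_i(t_k-)>0\}$. Then $\mathbf{V}^N_i(t)=\mathbf{V}^N_i(0)+\mathbf{A}^N_i(t)-\mathbf{L}^N_i(t)-\mathbf{C}^N_i(t)$ for $i\ge1$ and $\mathbf{V}^N_0=\mathbf{V}^N_1+1$. (This realizes the aggregate queue-length process of an $N$-station system with Poisson($\lambda$) arrivals per station, local service tokens of rate $1-p$ per station, and central service tokens of rate $Np$ serving a longest queue.) $\mathbf{X}^N=(\mathbf{V}^N,\mathbf{A}^N,\mathbf{L}^N,\mathbf{C}^N)$. *)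

From HB Require Import structures.
From mathcomp Require Import all_boot all_order all_algebra.
From mathcomp Require Import all_classical all_reals all_analysis.
Set Implicit Arguments. Unset Strict Implicit. Unset Printing Implicit Defensive.
Import Order.TTheory GRing.Theory Num.Theory.
Import numFieldNormedType.Exports.
Local Open Scope classical_set_scope.
Local Open Scope ring_scope.

Section QLB.
Variable R : realType.

Definition in_S (s : nat -> R) : Prop :=
  s 0%N = 1 /\ (forall i, s i.+1 <= s i) /\ (forall i, 0 <= s i <= 1).

Definition in_Sbar_inf (s : nat -> R) : Prop :=
  in_S s /\ cvgn (fun n => \sum_(1 <= i < n) s i).

Definition in_Vbar_inf (v : nat -> R) : Prop :=
  exists s, in_Sbar_inf s /\
    forall i, v i = limn (fun n => \sum_(i <= j < n) s j).

Definition wnorm (x : nat -> R) : \bar R :=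
  sqrte (\sum_(i <oo) ((2 ^+ i)^-1 * (x i) ^+ 2)%:E)%E.

Definition dZ (T : R) (x y : R -> nat -> R) : \bar R :=
  ereal_sup [set wnorm (fun i => x t i - y t i) | t in `[0, T]%classic].

(* literal set membership  u \in a + c [0, x)  *)
Definition in_scaled (u a c x : R) : Prop := exists y, 0 <= y < x /\ u = a + c * y.

Variables (lam p : R) (N : nat) (V0 : nat -> R) (U : nat -> R).

Definition Vof (A L C : nat -> R) (i : nat) : R :=
  if i is 0 then (V0 1%N + A 1%N - L 1%N - C 1%N) + 1
  else V0 i + A i - L i - C i.

Definition incrN (b : Prop) : R := if `[< b >] then N%:R^-1 else 0.

(* A, L, C after k jumps (indices i >= 1 are the paper's; index 0 stays 0) *)
Fixpoint ALC (k : nat) : (nat -> R) * (nat -> R) * (nat -> R) :=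
  match k with
  | 0 => (fun _ => 0, fun _ => 0, fun _ => 0)
  | k'.+1 =>
    let: (A, L, C) := ALC k' in
    let V := Vof A L C in
    let u := U k in
    (fun i => A i + incrN ((1 <= i)%N /\
         in_scaled u 0 (lam / (1 + lam)) (V i.-1 - V i)),
     fun i => L i + incrN ((1 <= i)%N /\
         in_scaled u (lam / (1 + lam)) ((1 - p) / (1 + lam)) (V i - V i.+1)),
     fun i => C i + incrN ((1 <= i)%N /\
         (1 - p / (1 + lam) <= u < 1) /\
         (* 1 <= i <= sup { j : V_j > 0 } *)
         (exists j, (i <= j)%N /\ 0 < V j)))
  end.

(* W : counting path of the rate-(1+lam) Poisson process; W(N t) = number of
   jumps of W^N up to time t, so X^N(t) is the state after W(N t) jumps. *)
Variable W : R -> nat.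

Definition Aproc (t : R) : nat -> R := (ALC (W (N%:R * t))).1.1.
Definition Lproc (t : R) : nat -> R := (ALC (W (N%:R * t))).1.2.
Definition Cproc (t : R) : nat -> R := (ALC (W (N%:R * t))).2.
Definition Vproc (t : R) : nat -> R := Vof (Aproc t) (Lproc t) (Cproc t).

End QLB.

Definition counting_path (R : realType) (tau : nat -> R) (W : R -> nat) : Prop :=
  tau 0%N = 0 /\ (forall k, tau k < tau k.+1) /\
  (forall s n, 0 <= s -> (W s = n <-> tau n <= s < tau n.+1)).

Definition Lipschitz_on (R : realType) (T L : R) (f : R -> R) : Prop :=
  forall a b, 0 <= a <= T -> 0 <= b <= T -> `|f a - f b| <= L * `|a - b|.

(* Every coordinate of A, L and C moves by at most 1/N at each tick of the
   clock W(N .), hence every coordinate of V by at most 3/N.  Since W^N(t)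
   tends to (1 + lam) t uniformly on [0, T], the four processes are
   asymptotically 3 (1 + lam) <= 6 Lipschitz in time, uniformly in the
   coordinate, and their initial values converge.  The rest is Arzela-Ascoli:
   a diagonal extraction makes every coordinate converge on the countable grid
   of points n T / (d + 1), asymptotic equicontinuity upgrades this to uniform
   convergence on [0, T] with Lipschitz limits, and the weights 2^-j turn
   uniform coordinatewise convergence with uniformly bounded deviations into
   convergence for d^{Z+}. *)

From HB Require Import structures.
From mathcomp Require Import all_boot all_order all_algebra.
From mathcomp Require Import all_classical all_reals all_analysis.
From mathcomp Require Import ring lra.
Import Order.TTheory GRing.Theory Num.Theory.
Import numFieldNormedType.Exports.
Local Open Scope classical_set_scope.
Local Open Scope ring_scope.

Lemma homo_ltn_infl {f : nat -> nat} :
  {homo f : m n / (m < n)%N} -> forall n, (n <= f n)%N.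
Proof. by move=> f_incr; elim=> // n /leq_ltn_trans; apply; apply: f_incr. Qed.

Lemma homo_ltn_cvgny {f : nat -> nat} :
  {homo f : m n / (m < n)%N} -> f @ \oo --> \oo.
Proof.
move=> f_incr; apply/cvgnyPge => A; exists A => // n /= /leq_trans; apply.
exact: homo_ltn_infl.
Qed.

Section diagonal_extraction.
Context {R : realType}.

Definition eventually_bounded (u : nat -> R) :=
  exists B, \forall n \near \oo, `|u n| <= B.

Lemma eventually_bounded_comp {u : nat -> R} {f : nat -> nat} :
  {homo f : m n / (m < n)%N} -> eventually_bounded u ->
  eventually_bounded (u \o f).
Proof. by move=> /homo_ltn_cvgny f_oo [B uB]; exists B; exact: (f_oo _ uB). Qed.

Lemma eventually_bounded_cvg_subseq (u : nat -> R) : eventually_bounded u ->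
  exists f, {homo f : m n / (m < n)%N} /\ cvgn (u \o f).
Proof.
move=> [B [M _ uB]].
have bounded_tail : bounded_fun (fun n => u (n + M)%N).
  exists B; split; first by rewrite num_real.
  by move=> x Bx y _; apply: le_trans (uB _ (leq_addl _ _)) (ltW Bx).
have [f /leqW_mono f_incr f_cvg] := bolzano_weierstrass bounded_tail.
by exists (fun n => (f n + M)%N); split=> // m n mn; rewrite ltn_add2r f_incr.
Qed.

Lemma cvg_subseq_ex (u : nat -> R) : exists f : nat -> nat,
  {homo f : m n / (m < n)%N} /\ (eventually_bounded u -> cvgn (u \o f)).
Proof.
have [/eventually_bounded_cvg_subseq [f [f_incr f_cvg]]|ub] :=
  pselect (eventually_bounded u); first by exists f.
by exists id; split=> // /ub.
Qed.

(* The identity when [u] is not eventually bounded. *)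
Definition cvg_subseq (u : nat -> R) : nat -> nat :=
  proj1_sig (cid (cvg_subseq_ex u)).

Lemma cvg_subseq_homo (u : nat -> R) : {homo cvg_subseq u : m n / (m < n)%N}.
Proof. by rewrite /cvg_subseq; case: cid => f []. Qed.

Lemma cvg_subseq_cvg (u : nat -> R) :
  eventually_bounded u -> cvgn (u \o cvg_subseq u).
Proof. by rewrite /cvg_subseq; case: cid => f []. Qed.

Section nested.
Variable x : nat -> nat -> R.
Hypothesis x_bounded : forall m, eventually_bounded (x m).

(* [nested k] extracts a subsequence along which [x 0], ..., [x k.-1] converge. *)
Fixpoint nested k : nat -> nat :=
  if k is k'.+1 then nested k' \o cvg_subseq (x k' \o nested k') else id.

Lemma nested_homo k : {homo nested k : m n / (m < n)%N}.
Proof.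
elim: k => [//|k IH] m n mn /=.
by apply: IH; apply: cvg_subseq_homo.
Qed.

Lemma nested_refine k k' : (k <= k')%N ->
  exists h, {homo h : m n / (m < n)%N} /\ nested k' =1 nested k \o h.
Proof.
elim: k' => [|k' IH]; first by rewrite leqn0 => /eqP->; exists id; split.
rewrite leq_eqVlt ltnS => /predU1P[->|/IH [h [h_incr Eh]]]; first by exists id; split.
exists (h \o cvg_subseq (x k' \o nested k')); split=> [m n mn|n].
  by apply: h_incr; apply: cvg_subseq_homo.
by rewrite /= Eh.
Qed.

Lemma nested_cvg k : cvgn (x k \o nested k.+1).
Proof.
exact: cvg_subseq_cvg (eventually_bounded_comp (nested_homo k) (x_bounded k)).
Qed.

Definition diagonal i := nested i.+1 i.

Lemma diagonal_homo : {homo diagonal : m n / (m < n)%N}.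
Proof.
apply: homo_ltn => [|i]; first exact: ltn_trans.
rewrite /diagonal [nested i.+2]/=; apply: nested_homo.
exact: homo_ltn_infl (cvg_subseq_homo _) i.+1.
Qed.

Lemma diagonal_cvg k : cvgn (x k \o diagonal).
Proof.
have /cvg_ex[l xl] := nested_cvg k; apply/cvg_ex; exists l.
apply/cvgrPdist_le => e e0; have [M _ xlM] := (cvgrPdist_le _ _).1 xl e e0.
exists (maxn M k) => // i; rewrite /= geq_max => /andP[Mi ki].
have [h [h_incr Eh]] := nested_refine _ _ (ki : (k.+1 <= i.+1)%N); rewrite /= /diagonal Eh.
by apply: xlM; rewrite /= (leq_trans Mi (homo_ltn_infl h_incr i)).
Qed.

End nested.

Lemma diagonal_subseq (I : countType) (x : I -> nat -> R) :
  (forall k, eventually_bounded (x k)) ->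
  exists psi, {homo psi : m n / (m < n)%N} /\ forall k, cvgn (x k \o psi).
Proof.
move=> x_bounded; pose y m := if unpickle m is Some k then x k else cst 0.
have y_bounded m : eventually_bounded (y m).
  rewrite /y; case: unpickle => [k|]; first exact: x_bounded.
  by exists 0; near=> n; rewrite normr0.
exists (diagonal y); split=> [|k]; first exact: diagonal_homo.
by have := diagonal_cvg _ y_bounded (pickle k); rewrite /y pickleK.
Unshelve. all: by end_near.
Qed.

End diagonal_extraction.

Lemma ler_normDBB {R : numDomainType} (a b c d : R) :
  `|a + b - c - d| <= `|a| + `|b| + `|c| + `|d|.
Proof.
apply: le_trans (ler_normB _ _) _; rewrite lerD2r.
by apply: le_trans (ler_normB _ _) _; rewrite lerD2r ler_normD.
Qed.

Definition grid {R : realType} (T : R) (d n : nat) : R := n%:R * (T / d.+1%:R).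

Lemma grid_itv {R : realType} {T : R} {d n : nat} : 0 <= T -> (n <= d.+1)%N ->
  0 <= grid T d n <= T.
Proof.
move=> T_ge0 nd; rewrite /grid mulr_ge0 ?divr_ge0//= mulrA.
by rewrite ler_pdivrMr ?ltr0n// mulrC ler_wpM2l// ler_nat.
Qed.

Lemma grid_approx {R : realType} {T t : R} (d : nat) : 0 < T -> 0 <= t <= T ->
  exists2 n, (n <= d.+1)%N & `|t - grid T d n| <= T / d.+1%:R.
Proof.
move=> T_gt0 /andP[t_ge0 tT]; set h := T / d.+1%:R.
have h_gt0 : 0 < h by rewrite divr_gt0 ?ltr0n.
have /andP[lo hi] := truncn_itv (divr_ge0 t_ge0 (ltW h_gt0)).
exists (Num.truncn (t / h)).
  rewrite -(ler_nat R); apply: le_trans lo _.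
  by rewrite ler_pdivrMr// /h mulrCA divff ?mulr1// pnatr_eq0.
rewrite ler_pdivlMr// in lo; rewrite -natr1 ltr_pdivrMr// mulrDl mul1r in hi.
by rewrite /grid -/h ger0_norm ?subr_ge0// lerBlDl ltW.
Qed.

Section uniform_limit.
Context {R : realType} {T L : R}.
Hypotheses (T_gt0 : 0 < T) (L_ge0 : 0 <= L).
Context {Z : nat -> R -> R}.
Hypothesis Z_lip : forall e, 0 < e -> \forall i \near \oo,
  forall t s, 0 <= t <= T -> 0 <= s <= T -> `|Z i t - Z i s| <= L * `|t - s| + e.
Hypothesis Z_grid : forall d n, (n <= d.+1)%N -> cvgn (fun i => Z i (grid T d n)).

(* The mesh is chosen with [L * mesh <= e/5]; going through the nearest grid
   point costs [2 e/5] on each side and [e/5] at the grid point. *)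
Lemma uniform_cauchy e : 0 < e -> exists M, forall a b, (M <= a)%N -> (M <= b)%N ->
  forall t, 0 <= t <= T -> `|Z a t - Z b t| <= e.
Proof.
move=> e_gt0; set e' := e / 5; have e'_gt0 : 0 < e' by rewrite divr_gt0.
have /andP[_ d_gt] := truncn_itv (divr_ge0 (mulr_ge0 L_ge0 (ltW T_gt0)) (ltW e'_gt0)).
set d := Num.truncn _ in d_gt.
have mesh : L * (T / d.+1%:R) <= e'.
  by rewrite ltr_pdivrMr // in d_gt; rewrite mulrA ler_pdivrMr ?ltr0n //; lra.
pose zl n := limn (fun i => Z i (grid T d n)).
have [M _ HM] : \forall i \near \oo,
    (forall n : 'I_d.+2, `|Z i (grid T d n) - zl n| <= e' / 2) /\
    (forall t s, 0 <= t <= T -> 0 <= s <= T -> `|Z i t - Z i s| <= L * `|t - s| + e').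
  near=> i; split; last by near: i; exact: Z_lip e'_gt0.
  near: i; apply: filter_forall => n.
  have e'2_gt0 : 0 < e' / 2 by rewrite divr_gt0.
  by apply: filterS ((cvgrPdist_le _ _).1 (Z_grid d n (ltn_ord n)) _ e'2_gt0) => i;
    rewrite distrC.
exists M => a b Ma Mb t tT.
have [n nd tn] := grid_approx d T_gt0 tT.
have gT := grid_itv (ltW T_gt0) nd.
have [za la] := HM a Ma; have [zb lb] := HM b Mb.
have := za (Ordinal (nd : (n < d.+2)%N)); have := zb (Ordinal (nd : (n < d.+2)%N)).
have := la _ _ tT gT; have := lb _ _ tT gT => /= h1 h2 h3 h4.
have Ltn : L * `|t - grid T d n| <= e' by apply: le_trans mesh; rewrite ler_wpM2l.
have -> : Z a t - Z b t = (Z a t - Z a (grid T d n)) + (Z a (grid T d n) - zl n)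
    - (Z b (grid T d n) - zl n) - (Z b t - Z b (grid T d n)) by ring.
apply: le_trans (ler_normDBB _ _ _ _) _; rewrite /e' in Ltn h1 h2 h3 h4 *; lra.
Unshelve. all: by end_near.
Qed.

Lemma pointwise_cvg t : 0 <= t <= T -> cvgn (fun i => Z i t).
Proof.
move=> tT; apply/cauchy_cvgP/cauchy_exP => e e_gt0.
have e2_gt0 : 0 < e / 2 by rewrite divr_gt0.
have [M HM] := uniform_cauchy _ e2_gt0.
exists (Z M t); exists M => // n Mn; rewrite -ball_normE /ball_ /=.
by apply: le_lt_trans (HM _ _ (leqnn M) Mn _ tT) _; rewrite ltr_pdivrMr// ltr_pMr// ltr1n.
Qed.

Lemma uniform_cvg e : 0 < e -> \forall i \near \oo,
  forall t, 0 <= t <= T -> `|Z i t - limn (fun k => Z k t)| <= e.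
Proof.
move=> e_gt0; have [M HM] := uniform_cauchy _ e_gt0; exists M => // i /= Mi t tT.
apply/ler_addgt0Pr => r r_gt0; have /cvg_ex[l Zl] := pointwise_cvg _ tT.
rewrite (cvg_lim _ Zl)//; have [K _ HK] := (cvgrPdist_le _ _).1 Zl _ r_gt0.
apply: le_trans (ler_distD (Z (maxn M K) t) _ _) _.
apply: lerD; first by apply: HM; rewrite ?leq_maxl.
by rewrite distrC; apply: HK; rewrite /= leq_maxr.
Qed.

Lemma lim_lipschitz : Lipschitz_on T L (fun t => limn (fun i => Z i t)).
Proof.
move=> a b aT bT; apply/ler_addgt0Pr => r r_gt0.
have r3_gt0 : 0 < r / 3 by rewrite divr_gt0.
near \oo => i.
set fa := limn _; set fb := limn _.
have ha : `|Z i a - fa| <= r / 3.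
  by near: i; apply: filterS (uniform_cvg _ r3_gt0) => i; apply.
have hb : `|Z i b - fb| <= r / 3.
  by near: i; apply: filterS (uniform_cvg _ r3_gt0) => i; apply.
have hab : `|Z i a - Z i b| <= L * `|a - b| + r / 3.
  by near: i; apply: filterS (Z_lip _ r3_gt0) => i; apply.
have -> : fa - fb = - (Z i a - fa) + (Z i a - Z i b) + (Z i b - fb) by ring.
apply: le_trans (ler_normD _ _) _; apply: le_trans (lerD (ler_normD _ _) (lexx _)) _.
rewrite normrN; lra.
Unshelve. all: by end_near.
Qed.

End uniform_limit.

Section weighted_norm.
Context {R : realType}.
Implicit Types (x y : nat -> R) (c : R).

Lemma nng_cvge0P (u : nat -> \bar R) : (forall n, 0 <= u n)%E ->
  u @ \oo --> 0%E <-> forall c, 0 < c -> \forall n \near \oo, (u n <= c%:E)%E.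
Proof.
move=> u_ge0; split=> [/fine_cvgP[u_fin /cvgrPdist_le u0] c c_gt0|u_small].
  near=> n; rewrite -(fineK (near u_fin n _))// lee_fin.
  by apply: le_trans (ler_norm _) _; rewrite -normrN -sub0r; near: n; exact: u0.
have u_fin : \forall n \near \oo, u n \is a fin_num.
  by apply: filterS (u_small _ ltr01) => n un; rewrite ge0_fin_numE// (le_lt_trans un) ?ltry.
apply/fine_cvgP; split=> //; apply/cvgrPdist_le => c c_gt0.
near=> n; rewrite sub0r normrN ger0_norm ?fine_ge0// -lee_fin fineK//.
  by near: n; exact: u_small.
by near: n.
Unshelve. all: by end_near.
Qed.

Lemma wnorm_ge0 x : (0 <= wnorm x)%E.
Proof. exact: sqrte_ge0. Qed.

Lemma wnorm_leP x c : 0 <= c ->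
  (wnorm x <= c%:E)%E <-> forall n, \sum_(0 <= j < n) 2 ^- j * x j ^+ 2 <= c ^+ 2.
Proof.
move=> c_ge0; have terms_ge0 k : (0 <= (2 ^- k * x k ^+ 2)%:E)%E.
  by rewrite lee_fin mulr_ge0 ?sqr_ge0 ?invr_ge0 ?exprn_ge0.
rewrite /wnorm -[c%:E]gee0_abs ?lee_fin// -sqrte_sqr -EFin_expe.
rewrite lee_sqrt ?lee_fin ?exprn_ge0//; split=> [le_sum n|le_partial].
  by rewrite -lee_fin -sumEFin; apply: le_trans le_sum; exact: nneseries_lim_ge.
apply: lime_le; first exact: is_cvg_nneseries.
by near=> n; rewrite sumEFin lee_fin.
Unshelve. all: by end_near.
Qed.

Lemma wnorm0 : wnorm (fun=> 0 : R) = 0%E.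
Proof.
apply/eqP; rewrite eq_le wnorm_ge0 andbT.
by apply/wnorm_leP => // n; rewrite big1// => j _; rewrite expr0n mulr0.
Qed.

Lemma wnorm_cvg0_coord (u : nat -> nat -> R) :
  (fun i => wnorm (u i)) @ \oo --> 0%E -> forall j, u^~ j @ \oo --> 0.
Proof.
move=> /nng_cvge0P - /(_ (fun=> wnorm_ge0 _)) u_small j.
have pj_gt0 : 0 < 2 ^+ j :> R by rewrite exprn_gt0.
apply/cvgrPdist_le => e e_gt0; rewrite /= in u_small.
near=> i; rewrite sub0r normrN -ler_sqr ?nnegrE ?(ltW e_gt0)// real_normK ?num_real//.
have ej_ge0 : 0 <= e / 2 ^+ j by rewrite divr_ge0 ?ltW.
have le_wnorm : (wnorm (u i) <= (e / 2 ^+ j)%:E)%E.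
  by near: i; apply: u_small; rewrite divr_gt0.
have := (wnorm_leP _ _ ej_ge0).1 le_wnorm j.+1; rewrite big_nat_recr//= => le_sum.
have {le_sum} : 2 ^- j * u i j ^+ 2 <= (e / 2 ^+ j) ^+ 2.
  apply: le_trans le_sum; rewrite lerDr; apply: sumr_ge0 => k _.
  by rewrite mulr_ge0 ?sqr_ge0 ?invr_ge0 ?exprn_ge0.
rewrite expr_div_n -ler_pdivlMl ?invr_gt0// invrK => /le_trans; apply.
have -> : 2 ^+ j * (e ^+ 2 / 2 ^+ j ^+ 2) = e ^+ 2 / 2 ^+ j.
  by rewrite mulrCA [2 ^+ j ^+ 2]expr2 invfM mulVKf ?gt_eqF.
by rewrite ler_pdivrMr// ler_peMr ?sqr_ge0// exprn_ege1// ler1n.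
Unshelve. all: by end_near.
Qed.

Lemma sum_geom_tail_le J n :
  \sum_(0 <= j < n) (if (J <= j)%N then 2 ^- j else 0) <= 2 * 2 ^- J :> R.
Proof.
have pw_neq0 k : 2 ^+ k != 0 :> R by rewrite expf_neq0// pnatr_eq0.
suff -> : \sum_(0 <= j < n) (if (J <= j)%N then 2 ^- j else 0) =
    if (J <= n)%N then 2 * 2 ^- J - 2 * 2 ^- n else 0 :> R.
  by case: ifP => _; rewrite ?mulr_ge0 ?invr_ge0 ?exprn_ge0// lerBlDr lerDl
    mulr_ge0 ?invr_ge0 ?exprn_ge0.
elim: n => [|n IH]; first by rewrite big_geq//; case: J => //; rewrite subrr.
rewrite big_nat_recr//= IH; case: (ltngtP J n) => [Jn|nJ|->].
- by rewrite (leqW (ltnW Jn)) exprS invfM; field; rewrite !pw_neq0.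
- rewrite addr0; case: leqP => // J_le.
  suff -> : J = n.+1 by rewrite subrr.
  by apply/eqP; rewrite eqn_leq J_le nJ.
- by rewrite leqnSn exprS invfM; field; rewrite !pw_neq0.
Qed.

(* The constant [12] makes the tail contribution [4 K^2 2^-J] at most [c^2/3];
   the head and [y] contribute at most [4 (c/3)^2]. *)
Lemma wnorm_le_split x y c K J :
  0 <= c -> 12 * K ^+ 2 <= c ^+ 2 * 2 ^+ J ->
  (forall j, (j < J)%N -> `|x j| <= c / 3) ->
  (forall j, `|x j| <= `|y j| + K) ->
  (wnorm y <= (c / 3)%:E)%E -> (wnorm x <= c%:E)%E.
Proof.
move=> c_ge0 KJ x_head x_tail y_small; apply/wnorm_leP => // n.
have pw_ge0 j : 0 <= 2 ^- j :> R by rewrite invr_ge0 exprn_ge0.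
have term j : 2 ^- j * x j ^+ 2 <= (c / 3) ^+ 2 * 2 ^- j
    + 2 * (2 ^- j * y j ^+ 2) + 2 * K ^+ 2 * (if (J <= j)%N then 2 ^- j else 0).
  have yj_ge0 : 0 <= 2 ^- j * y j ^+ 2 by rewrite mulr_ge0 ?sqr_ge0.
  have cj_ge0 : 0 <= (c / 3) ^+ 2 * 2 ^- j by rewrite mulr_ge0 ?sqr_ge0.
  case: leqP => Jj; rewrite ?mulr0 ?addr0.
    have : x j ^+ 2 <= 2 * y j ^+ 2 + 2 * K ^+ 2.
      rewrite -real_normK ?num_real// -[y j ^+ 2]real_normK ?num_real//.
      have := x_tail j; have := sqr_ge0 (`|y j| - K); have := normr_ge0 (x j).
      set a := `|x j|; set b := `|y j|; nra.
    by move/(ler_wpM2l (pw_ge0 j)); lra.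
  have : x j ^+ 2 <= (c / 3) ^+ 2.
    rewrite -real_normK ?num_real// ler_sqr ?nnegrE ?divr_ge0//; exact: x_head.
  by move/(ler_wpM2l (pw_ge0 j)); lra.
apply: le_trans (ler_sum _ (fun j _ => term j)) _.
rewrite !big_split /= -!mulr_sumr.
have S1 : \sum_(0 <= j < n) 2 ^- j <= 2 :> R.
  by have := sum_geom_tail_le 0 n; rewrite expr0 invr1 mulr1.
have S2 := sum_geom_tail_le J n.
have S3 := (wnorm_leP _ _ (divr_ge0 c_ge0 (ler0n _ 3))).1 y_small n.
have {}KJ : 2 ^- J * (12 * K ^+ 2) <= c ^+ 2.
  by rewrite mulrC ler_pdivrMr ?exprn_gt0.
have := ler_wpM2l (sqr_ge0 (c / 3)) S1; have := ler_wpM2l (sqr_ge0 K) S2.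
have := sqr_ge0 c; lra.
Qed.

End weighted_norm.

Lemma ex_ler_pow2 {R : realType} (a b : R) : 0 < b -> exists J, a <= b * 2 ^+ J.
Proof.
move=> b_gt0.
exists (Num.truncn `|a / b|).+1; rewrite -ler_pdivrMl//.
apply: le_trans (ler_norm _) _; rewrite mulrC.
have /andP[_ /ltW ab] := truncn_itv (normr_ge0 (a / b)).
by apply: le_trans ab _; rewrite -natrX ler_nat ltnW// ltn_expl.
Qed.

Section path_limit.
Context {R : realType} {T L : R}.
Hypotheses (T_gt0 : 0 < T) (L_ge0 : 0 <= L).
Variables (Z : nat -> R -> nat -> R) (z0 : nat -> R).
Hypothesis Z_lip : forall e, 0 < e -> \forall i \near \oo,
  forall t s, 0 <= t <= T -> 0 <= s <= T ->
  forall j, `|Z i t j - Z i s j| <= L * `|t - s| + e.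
Hypothesis Z0 : (fun i => wnorm (fun j => Z i 0 j - z0 j)) @ \oo --> 0%E.
Hypothesis Z_grid : forall j d n, (n <= d.+1)%N -> cvgn (fun i => Z i (grid T d n) j).

Definition lim_path (t : R) (j : nat) : R := limn (fun i => Z i t j).

Let Zj_lip j e : 0 < e -> \forall i \near \oo,
  forall t s, 0 <= t <= T -> 0 <= s <= T -> `|Z i t j - Z i s j| <= L * `|t - s| + e.
Proof. by move=> e_gt0; apply: filterS (Z_lip _ e_gt0) => i Zi t s tT sT; exact: Zi. Qed.

Lemma lim_path0 : lim_path 0 = z0.
Proof.
apply/funext => j; apply: cvg_lim => //; apply: cvg_sub0 (cvg_cst (z0 j)).
exact: wnorm_cvg0_coord Z0 j.
Qed.

Lemma lim_path_lipschitz j : Lipschitz_on T L (fun t => lim_path t j).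
Proof. exact: (lim_lipschitz T_gt0 L_ge0 (Zj_lip j) (Z_grid j)). Qed.

Lemma dZ_ge0 (x y : R -> nat -> R) : (0 <= dZ T x y)%E.
Proof.
apply: le_ereal_sup_tmp; exists (wnorm (fun j => x 0 j - y 0 j)).
  by exists 0 => //=; rewrite in_itv/= lexx ltW.
exact: wnorm_ge0.
Qed.

Lemma lim_path_dev_le i t j : 0 <= t <= T ->
  (forall s, 0 <= s <= T -> `|Z i t j - Z i s j| <= L * `|t - s| + 1) ->
  `|Z i t j - lim_path t j| <= `|Z i 0 j - z0 j| + (2 * L * T + 1).
Proof.
move=> tT Zi_lip; have T0 : (0 : R) <= 0 <= T by rewrite lexx ltW.
have := Zi_lip 0 T0; have := lim_path_lipschitz j t 0 tT T0.
have /andP[t_ge0 t_leT] := tT; rewrite lim_path0 !subr0 (ger0_norm t_ge0).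
have : L * t <= L * T by rewrite ler_wpM2l.
have -> : Z i t j - lim_path t j = (Z i 0 j - z0 j) + (Z i t j - Z i 0 j)
   - (lim_path t j - z0 j) by ring.
move=> LtT h1 h2; apply: le_trans (ler_normB _ _) _.
by apply: le_trans (lerD (ler_normD _ _) (lexx _)) _; lra.
Qed.

Lemma dZ_cvg_lim_path : (fun i => dZ T (Z i) lim_path) @ \oo --> 0%E.
Proof.
apply/nng_cvge0P => [i|c c_gt0]; first exact: dZ_ge0.
have c3_gt0 : 0 < c / 3 by rewrite divr_gt0.
have [J KJ] := ex_ler_pow2 (12 * (2 * L * T + 1) ^+ 2) (c ^+ 2) (exprn_gt0 2 c_gt0).
near=> i.
have Zi_lip : forall t s, 0 <= t <= T -> 0 <= s <= T ->
    forall j, `|Z i t j - Z i s j| <= L * `|t - s| + 1.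
  by near: i; exact: Z_lip.
have Zi_head : forall j : 'I_J, forall t, 0 <= t <= T ->
    `|Z i t j - lim_path t j| <= c / 3.
  by near: i; apply: filter_forall => j; exact: uniform_cvg (Zj_lip j) (Z_grid j) _ c3_gt0.
have Zi0 : (wnorm (fun j => (Z i 0 j - z0 j)%R) <= (c / 3)%:E)%E.
  by near: i; exact: (nng_cvge0P _ (fun=> wnorm_ge0 _)).1 Z0 _ c3_gt0.
apply: ge_ereal_sup => _ [t /= /[!in_itv]/= tT <-].
apply: (wnorm_le_split _ _ _ _ _ (ltW c_gt0) KJ _ _ Zi0) => [j jJ|j].
  exact: (Zi_head (Ordinal jJ)).
by apply: lim_path_dev_le => // s sT; exact: Zi_lip.
Unshelve. all: by end_near.
Qed.

End path_limit.

Lemma eventually_bounded_near {R : realType} (u v : nat -> R) (B : R) :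
  (\forall i \near \oo, `|u i - v i| <= B) -> cvgn v -> eventually_bounded u.
Proof.
move=> uv /cvg_seq_bounded [M [_ vM]]; exists (B + (M + 1)).
apply: filterS uv => i uvi; rewrite -[u i](subrK (v i)).
by apply: le_trans (ler_normD _ _) _; apply: lerD => //; apply: vM => //; lra.
Qed.

Theorem asymptotically_lipschitz_subseq {R : realType} {I : countType} {T L : R}
    (Y : I -> nat -> R -> nat -> R) (y0 : I -> nat -> R) :
  0 < T -> 0 <= L ->
  (forall k e, 0 < e -> \forall N \near \oo,
     forall t s, 0 <= t <= T -> 0 <= s <= T ->
     forall j, `|Y k N t j - Y k N s j| <= L * `|t - s| + e) ->
  (forall k, (fun N => wnorm (fun j => Y k N 0 j - y0 k j)) @ \oo --> 0%E) ->
  exists psi, {homo psi : m n / (m < n)%N} /\ forall k, exists y : R -> nat -> R,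
    [/\ (fun i => dZ T (Y k (psi i)) y) @ \oo --> 0%E, y 0 = y0 k
      & forall j, Lipschitz_on T L (fun t => y t j)].
Proof.
move=> T_gt0 L_ge0 Y_lip Y0.
pose x (kjdn : I * nat * nat * nat) N :=
  let: (k, j, d, n) := kjdn in Y k N (grid T d (minn n d.+1)) j.
have x_bounded kjdn : eventually_bounded (x kjdn).
  case: kjdn => [[[k j] d] n]; apply: (@eventually_bounded_near _ _ (Y k ^~ 0 ^~ j)
    (L * T + 1)).
    have gT := grid_itv (ltW T_gt0) (geq_minr n d.+1).
    have T0 : (0 : R) <= 0 <= T by rewrite lexx ltW.
    apply: filterS (Y_lip k _ ltr01) => N /(_ _ _ gT T0 j); rewrite subr0.
    move/le_trans; apply; rewrite lerD2r ler_wpM2l// ger0_norm; case/andP: gT => //.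
  apply/cvg_ex; exists (y0 k j); apply: cvg_sub0 (cvg_cst (y0 k j)).
  exact: wnorm_cvg0_coord (Y0 k) j.
have [psi [psi_incr x_cvg]] := diagonal_subseq _ x x_bounded.
exists psi; split=> // k; pose Z i := Y k (psi i).
have Z_lip e : 0 < e -> \forall i \near \oo, forall t s, 0 <= t <= T -> 0 <= s <= T ->
    forall j, `|Z i t j - Z i s j| <= L * `|t - s| + e.
  by move=> e_gt0; exact: (homo_ltn_cvgny psi_incr) _ (Y_lip k e e_gt0).
have Z0 : (fun i => wnorm (fun j => Z i 0 j - y0 k j)) @ \oo --> 0%E.
  exact: cvg_comp (homo_ltn_cvgny psi_incr) (Y0 k).
have Z_grid j d n : (n <= d.+1)%N -> cvgn (fun i => Z i (grid T d n) j).
  by move=> nd; have := x_cvg (k, j, d, n); rewrite /x (minn_idPl nd).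
exists (lim_path Z); split.
- exact: (dZ_cvg_lim_path T_gt0 L_ge0 _ _ Z_lip Z0 Z_grid).
- exact: (lim_path0 _ _ Z0).
- exact: (lim_path_lipschitz T_gt0 L_ge0 _ Z_lip Z_grid).
Qed.

Lemma ler_dist_steps {R : numDomainType} (X : nat -> R) (c : R) :
  (forall k, `|X k.+1 - X k| <= c) ->
  forall k k', `|X k - X k'| <= c * `|k%:R - k'%:R|.
Proof.
move=> X_step k k'; wlog kk' : k k' / (k <= k')%N.
  by move=> H; case: (leqP k k') => [/H//|/ltnW/H]; rewrite distrC [`|k'%:R - _|]distrC.
rewrite -(subnKC kk'); elim: (k' - k)%N => [|m IH].
  by rewrite addn0 !subrr normr0 mulr0.
rewrite addnS; apply: le_trans (ler_distD (X (k + m)%N) _ _) _.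
rewrite [`|X (k + m)%N - _|]distrC.
have -> : `|k%:R - (k + m).+1%:R| = `|k%:R - (k + m)%:R| + 1 :> R.
  rewrite -natr1 natrD !opprD !addrA subrr !add0r -opprD !normrN.
  by rewrite !ger0_norm ?addr_ge0.
by rewrite mulrDr mulr1 lerD.
Qed.

Section jump_bounds.
Context {R : realType} (lam p : R) (N : nat) (V0 U : nat -> R).
Local Notation A k := (ALC lam p N V0 U k).1.1.
Local Notation L k := (ALC lam p N V0 U k).1.2.
Local Notation C k := (ALC lam p N V0 U k).2.

Lemma incrN_norm_le (b : Prop) : `|incrN R N b| <= N%:R^-1.
Proof. by rewrite /incrN; case: asboolP => _; rewrite ?normr0 ?ger0_norm ?invr_ge0. Qed.

Lemma ALC_step_le k i : [/\ `|A k.+1 i - A k i| <= N%:R^-1,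
  `|L k.+1 i - L k i| <= N%:R^-1 & `|C k.+1 i - C k i| <= N%:R^-1].
Proof.
rewrite [ALC _ _ _ _ _ k.+1]/=; case: (ALC _ _ _ _ _ k) => [[a l] c] /=.
by rewrite ![_ i + _ - _ i]addrC !addKr; split; exact: incrN_norm_le.
Qed.

Lemma ALC_dist_le k k' i (d := N%:R^-1 * `|k%:R - k'%:R|) :
  [/\ `|A k i - A k' i| <= d, `|L k i - L k' i| <= d & `|C k i - C k' i| <= d].
Proof.
split; [apply: (ler_dist_steps (fun k => A k i)) | apply: (ler_dist_steps (fun k => L k i))
       | apply: (ler_dist_steps (fun k => C k i))] => m; by case: (ALC_step_le m i).
Qed.

(* Coordinate 0 of [Vof] is coordinate 1 shifted by 1, hence [maxn i 1]. *)
Lemma Vof_dist_le k k' i :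
  `|Vof V0 (A k) (L k) (C k) i - Vof V0 (A k') (L k') (C k') i|
    <= 3 * (N%:R^-1 * `|k%:R - k'%:R|).
Proof.
have -> : Vof V0 (A k) (L k) (C k) i - Vof V0 (A k') (L k') (C k') i =
    (A k (maxn i 1) - A k' (maxn i 1)) - (L k (maxn i 1) - L k' (maxn i 1))
    - (C k (maxn i 1) - C k' (maxn i 1)).
  by case: i => [|i] /=; ring.
have [dA dL dC] := ALC_dist_le k k' (maxn i 1).
apply: le_trans (ler_normB _ _) _; apply: le_trans (lerD (ler_normB _ _) (lexx _)) _.
lra.
Qed.

End jump_bounds.

Lemma counting_path0 {R : realType} (tau : nat -> R) W :
  counting_path tau W -> W 0 = 0%N.
Proof.
move=> [tau0 [tau_incr W_def]].
have tau_gt0 m : 0 < tau m.+1.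
  by elim: m => [|m IH]; [rewrite -tau0 | apply: lt_trans IH _].
have /andP[+ _] := (W_def 0 (W 0) (lexx 0)).1 erefl.
by case: (W 0) => // m /(lt_le_trans (tau_gt0 m)); rewrite ltxx.
Qed.

Definition jump_proc {R : realType} (lam p : R) (V0 : nat -> nat -> R) U W
    (q N : nat) : R -> nat -> R :=
  match q with
  | 0 => Vproc lam p N (V0 N) U W
  | 1 => Aproc lam p N (V0 N) U W
  | 2 => Lproc lam p N (V0 N) U W
  | _ => Cproc lam p N (V0 N) U W
  end.

Lemma jump_proc_dist_le {R : realType} (lam p : R) V0 U W q N (t s : R) j :
  `|jump_proc lam p V0 U W q N t j - jump_proc lam p V0 U W q N s j|
    <= 3 * `|(W (N%:R * t))%:R / N%:R - (W (N%:R * s))%:R / N%:R|.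
Proof.
rewrite -mulrBl normrM normfV normr_nat [`|_| * _]mulrC.
have [dA dL dC] := ALC_dist_le lam p N (V0 N) U (W (N%:R * t)) (W (N%:R * s)) j.
have d_ge0 : 0 <= N%:R^-1 * `|(W (N%:R * t))%:R - (W (N%:R * s))%:R| :> R.
  by rewrite mulr_ge0 ?invr_ge0.
by case: q => [|[|[|q]]] /=; [exact: Vof_dist_le | lra | lra | lra].
Qed.

Lemma jump_proc0 {R : realType} {lam p : R} {V0 U} {tau : nat -> R} {W q N} :
  counting_path tau W -> (0 < q)%N -> jump_proc lam p V0 U W q N 0 = fun=> 0.
Proof.
move=> /counting_path0 W0; case: q => [|[|[|q]]] // _;
  by rewrite /= /Aproc /Lproc /Cproc mulr0 W0.
Qed.

Lemma near_lipschitz_lln {R : realType} {lam T : R} {w : nat -> R -> R}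
    {X : nat -> R -> nat -> R} : 0 <= lam < 1 ->
  (forall N t s j, `|X N t j - X N s j| <= 3 * `|w N t - w N s|) ->
  (forall e, 0 < e -> \forall N \near \oo,
     forall t, 0 <= t <= T -> `|w N t - (1 + lam) * t| <= e) ->
  forall e, 0 < e -> \forall N \near \oo, forall t s, 0 <= t <= T -> 0 <= s <= T ->
    forall j, `|X N t j - X N s j| <= 6 * `|t - s| + e.
Proof.
move=> /andP[lam_ge0 lam_lt1] X_le w_lln e e_gt0.
have e6_gt0 : 0 < e / 6 by rewrite divr_gt0.
apply: filterS (w_lln _ e6_gt0) => N wN t s tT sT j.
apply: le_trans (X_le N t s j) _; have := wN t tT; have := wN s sT.
have -> : w N t - w N s = (w N t - (1 + lam) * t) + (1 + lam) * (t - s)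
    - (w N s - (1 + lam) * s) by ring.
move=> ws wt; have := ler_normB (w N t - (1 + lam) * t + (1 + lam) * (t - s))
  (w N s - (1 + lam) * s).
have := ler_normD (w N t - (1 + lam) * t) ((1 + lam) * (t - s)).
rewrite normrM (ger0_norm (_ : 0 <= 1 + lam)); last lra.
have := normr_ge0 (t - s); set u := `|t - s|; nra.
Qed.



Lemma ereal_sup_cvg0_near {R : realType} (T : R) (f : nat -> R -> R) : 0 <= T ->
  (fun N => ereal_sup [set (`|f N t|)%:E | t in `[0, T]]) @ \oo --> 0%E ->
  forall e, 0 < e -> \forall N \near \oo, forall t, 0 <= t <= T -> `|f N t| <= e.
Proof.
move=> T_ge0 f_cvg e e_gt0.
have sup_ge0 N : (0 <= ereal_sup [set (`|f N t|)%:E | t in `[0%R, T]])%E.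
  apply: le_ereal_sup_tmp; exists (`|f N 0|)%:E => //.
  by exists 0 => //=; rewrite in_itv/= lexx.
apply: filterS ((nng_cvge0P _ sup_ge0).1 f_cvg e e_gt0) => N fN t tT.
rewrite -lee_fin; apply: le_trans fN; apply: ereal_sup_ubound.
by exists t => //=; rewrite in_itv.
Qed.

Theorem proposition1 (R : realType) (lam p : R) :
  0 <= lam < 1 -> 0 <= p <= 1 ->
  exists L : R, 0 < L /\
  forall (T : R) (tau : nat -> R) (W : R -> nat) (U : nat -> R)
         (V0 : nat -> nat -> R) (v0 : nat -> R),
  0 < T ->
  counting_path tau W ->
  (forall N : nat, (1 <= N)%N ->
     in_Vbar_inf (V0 N) /\ (forall i, exists m : int, V0 N i = m%:~R / N%:R)) ->
  (fun N : nat => ereal_sup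
     [set (`|(W (N%:R * t))%:R / N%:R - (1 + lam) * t|)%:E | t in `[0, T]])
     @ \oo --> 0%E ->
  (forall a b : R, 0 <= a -> a < b -> b <= 1 ->
     (fun N : nat => N%:R^-1 * \sum_(1 <= k < N.+1) (if a <= U k < b then 1 else 0))
       @ \oo --> b - a) ->
  in_Vbar_inf v0 ->
  (fun N : nat => wnorm (fun i => Vproc lam p N (V0 N) U W 0 i - v0 i)) @ \oo --> 0%E ->
  forall phi : nat -> nat, (forall m n, (m < n)%N -> (phi m < phi n)%N) -> (1 <= phi 0%N)%N ->
  exists psi : nat -> nat, (forall m n, (m < n)%N -> (psi m < psi n)%N) /\
  exists v a l c : R -> nat -> R,
    let Ni := fun i => phi (psi i) in
    (fun i => dZ T (Vproc lam p (Ni i) (V0 (Ni i)) U W) v) @ \oo --> 0%E /\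
    (fun i => dZ T (Aproc lam p (Ni i) (V0 (Ni i)) U W) a) @ \oo --> 0%E /\
    (fun i => dZ T (Lproc lam p (Ni i) (V0 (Ni i)) U W) l) @ \oo --> 0%E /\
    (fun i => dZ T (Cproc lam p (Ni i) (V0 (Ni i)) U W) c) @ \oo --> 0%E /\
    v 0 = v0 /\ a 0 = (fun _ => 0) /\ l 0 = (fun _ => 0) /\ c 0 = (fun _ => 0) /\
    (forall j : nat,
       Lipschitz_on T L (fun t => v t j) /\ Lipschitz_on T L (fun t => a t j) /\
       Lipschitz_on T L (fun t => l t j) /\ Lipschitz_on T L (fun t => c t j)).
Proof.
move=> lam_itv _; exists 6; split=> [|T tau W U V0 v0 T_gt0 W_path _ W_lln _ _ V_init];
  first lra.
move=> phi phi_incr _; pose Y q N := jump_proc lam p V0 U W q (phi N).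
pose y0 (q : nat) := if q is 0 then v0 else fun=> 0.
pose w (N : nat) (t : R) : R := (W (N%:R * t))%:R / N%:R.
have w_lln := ereal_sup_cvg0_near T (fun N t => w N t - (1 + lam) * t) (ltW T_gt0) W_lln.
have Y_lip q e : 0 < e -> \forall N \near \oo, forall t s, 0 <= t <= T -> 0 <= s <= T ->
    forall j, `|Y q N t j - Y q N s j| <= 6 * `|t - s| + e.
  move=> e_gt0; exact: (homo_ltn_cvgny phi_incr) _ (near_lipschitz_lln (w := w) lam_itv
    (jump_proc_dist_le lam p V0 U W q) w_lln _ e_gt0).
have Y0 q : (fun N => wnorm (fun j => Y q N 0 j - y0 q j)) @ \oo --> 0%E.
  case: q => [|q]; first exact: cvg_comp (homo_ltn_cvgny phi_incr) V_init.
  suff -> : (fun N => wnorm (fun j => Y q.+1 N 0 j - y0 q.+1 j)) = fun=> 0%E.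
    exact: cvg_cst.
  apply/funext => N; rewrite /Y (jump_proc0 W_path)// -wnorm0.
  by congr wnorm; apply/funext => j; rewrite subrr.
have [psi [psi_incr Y_cvg]] :=
  asymptotically_lipschitz_subseq Y y0 T_gt0 (ler0n _ 6) Y_lip Y0.
exists psi; split=> //.
have [v [Vv v_0 v_lip]] := Y_cvg 0%N; have [a [Aa a_0 a_lip]] := Y_cvg 1%N.
have [l [Ll l_0 l_lip]] := Y_cvg 2%N; have [c [Cc c_0 c_lip]] := Y_cvg 3%N.
by exists v, a, l, c.
Qed.
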